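(* Let $G$ be a connected finite simple graph with $n$ vertices and diameter at most $2$. Then for every $R$-weighted complete graph $X$ with $n$ vertices, $|s(\{I(G)\}*\{X\})|=1$ if and only if $|s(\{\rho(G)\}*\{X\})|=1$; that is, $I(G)^{\perp}=\rho(G)^{\perp}$.
   Context: Fix a commutative ring $R$. An $R$-weighted complete graph $K$ is a finite vertex set with a weight $v_K(e)\in R$ on every 2-subset $e$. For such $H,G'$ with equal vertex counts and a bijection $f:V(H)\to V(G')$, $H*_fG'$ has vertex set $V(H)$ and weights $v_H(\{x,y\})v_{G'}(\{f(x),f(y)\})$; $H*G'=\{H*_fG': f \text{ bijection}\}$. $s(K)=\sum_e v_K(e)$, $s(\mathscr K)=\{s(K):K\in\mathscr K\}$. For a weighted complete graph $H$, $H^{\perp}$ is the class of $R$-weighted complete graphs $X$ with $|V(X)|=|V(H)|$ and $|s(H*X)|=1$. For a simple graph $G$, $I(G)$ has weight $1$ on edges and $0$ on non-edges; for connected $G$, $\rho(G)$ has weight $\rho_G(x,y)$ (graph distance) on $\{x,y\}$. *)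

From HB Require Import structures.
From mathcomp Require Import all_boot all_order all_algebra.
Set Implicit Arguments. Unset Strict Implicit. Unset Printing Implicit Defensive.
Import GRing.Theory.
Local Open Scope ring_scope.

(* A simple graph on the finite vertex type T is a symmetric irreflexive
   relation e : rel T.  An R-weighted complete graph on a finite vertex type
   V is a weight function w : {set V} -> R, of which only the values on
   2-subsets matter. *)

Fixpoint reach_le (T : finType) (e : rel T) (k : nat) (x y : T) : bool :=
  match k with
  | 0 => x == y
  | k'.+1 => reach_le e k' x y || [exists z, reach_le e k' x z && e z y]
  end.

(* graph distance (meaningful for connected graphs: the least k with a walk
   of length k; any shortest walk has length < #|T|) *)
Definition gdist (T : finType) (e : rel T) (x y : T) : nat :=
  find (fun k => reach_le e k x y) (iota 0 #|T|).

(* the weight on a 2-subset {x,y} induced by a symmetric function d *)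
Definition of_pairs (R : nmodType) (T : finType) (d : T -> T -> R)
    (A : {set T}) : R :=
  match [pick x in A] with
  | Some x => match [pick y in A :\ x] with Some y => d x y | None => 0 end
  | None => 0
  end.

Definition IG (R : comPzRingType) (T : finType) (e : rel T) : {set T} -> R :=
  of_pairs (fun x y => if e x y then (1 : R) else 0).

Definition rhoG (R : comPzRingType) (T : finType) (e : rel T) : {set T} -> R :=
  of_pairs (fun x y => ((gdist e x y)%:R : R)).

Definition s_prod (R : comPzRingType) (T V : finType) (h : {set T} -> R)
    (X : {set V} -> R) (f : T -> V) : R :=
  \sum_(A : {set T} | #|A| == 2%N) h A * X (f @: A).

(* |s({H} * {X})| = 1 : the set { s(H *_f X) : f bijection } is a singleton *)
Definition s_singleton (R : comPzRingType) (T V : finType) (h : {set T} -> R)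
    (X : {set V} -> R) : Prop :=
  exists c : R, forall r : R,
    (exists f : T -> V, bijective f /\ r = s_prod h X f) <-> r = c.

(* In a graph of diameter at most 2, distinct vertices are at distance 1 if
   adjacent and 2 otherwise, so on every 2-subset rho(G) = 2 - I(G).  Hence for
   every bijection f, s(rho(G) *_f X) = 2 s(X) - s(I(G) *_f X), where s(X) does
   not depend on f.  The affine involution r |-> 2 s(X) - r therefore maps one
   set of sums onto the other, and one is a singleton iff the other is. *)
From HB Require Import structures.
From mathcomp Require Import all_boot all_order all_algebra.
Set Implicit Arguments. Unset Strict Implicit.
Import GRing.Theory.
Local Open Scope ring_scope.

Section GraphDistance.

Variables (T : finType) (e : rel T).

Lemma reach_le1 (x y : T) : reach_le e 1 x y = (x == y) || e x y.
Proof.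
rewrite /=; congr (_ || _); apply/existsP/idP => [[z /andP[/eqP-> //]]|exy].
by exists x; rewrite eqxx.
Qed.

Lemma gdist_le (k : nat) (x y : T) :
  (k < #|T|)%N -> reach_le e k x y -> (gdist e x y <= k)%N.
Proof.
move=> kT rk; rewrite leqNgt; apply/negP => /(before_find 0%N).
by rewrite nth_iota ?add0n ?rk.
Qed.

Lemma gdist_neq (k : nat) (x y : T) :
  (k < #|T|)%N -> ~~ reach_le e k x y -> gdist e x y != k.
Proof.
move=> kT nrk; apply/eqP => dk.
have has_k : has (fun j => reach_le e j x y) (iota 0 #|T|).
  by rewrite has_find size_iota -/(gdist e x y) dk.
move: (nth_find 0%N has_k).
by rewrite -/(gdist e x y) dk nth_iota ?add0n ?(negbTE nrk).
Qed.

Lemma gdist_diam2 (x y : T) :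
  x != y -> (gdist e x y <= 2)%N -> gdist e x y = (if e x y then 1 else 2)%N.
Proof.
move=> xy d_le2.
have two_le_T : (2 <= #|T|)%N.
  by have := subset_leq_card (subsetT [set x; y]); rewrite cards2 xy cardsT.
have d_neq0 : gdist e x y != 0%N by rewrite gdist_neq //= ltnW.
case exy: (e x y).
  have : (gdist e x y <= 1)%N by rewrite gdist_le // reach_le1 exy orbT.
  by move: d_neq0; case: (gdist e x y) => [|[|]].
have d_neq1 : gdist e x y != 1%N by rewrite gdist_neq // reach_le1 exy (negbTE xy).
by move: d_neq0 d_neq1 d_le2; case: (gdist e x y) => [|[|[|]]].
Qed.

End GraphDistance.

Lemma of_pairs_card2 (R1 R2 : nmodType) (T : finType) (d1 : T -> T -> R1)
    (d2 : T -> T -> R2) (g : R2 -> R1) (A : {set T}) :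
  (forall x y, x != y -> d1 x y = g (d2 x y)) ->
  #|A| = 2%N -> of_pairs d1 A = g (of_pairs d2 A).
Proof.
move=> d12 A2; rewrite /of_pairs.
case: pickP => [x xA|A0]; last by move: A2; rewrite (eq_card0 A0).
case: pickP => [y|A1]; last by move: A2; rewrite (cardsD1 x A) xA (eq_card0 A1).
by rewrite !inE => /andP[yx _]; rewrite d12 // eq_sym.
Qed.

Lemma sum_card2_imset (R : nmodType) (T V : finType) (X : {set V} -> R)
    (f : T -> V) : bijective f ->
  \sum_(A : {set T} | #|A| == 2%N) X (f @: A) =
  \sum_(B : {set V} | #|B| == 2%N) X B.
Proof.
case=> g fK gK; rewrite (reindex (fun A : {set T} => f @: A)) /=.
  by apply: eq_bigl => A; rewrite card_imset //; apply: can_inj fK.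
apply: onW_bij; exists (fun B : {set V} => g @: B) => A.
  by rewrite -imset_comp (eq_imset _ fK) imset_id.
by rewrite -imset_comp (eq_imset _ gK) imset_id.
Qed.

Lemma s_singleton_map (R : comPzRingType) (T V : finType)
    (h1 h2 : {set T} -> R) (X : {set V} -> R) (g : R -> R) :
  (forall f : T -> V, bijective f -> s_prod h2 X f = g (s_prod h1 X f)) ->
  s_singleton h1 X -> s_singleton h2 X.
Proof.
move=> h12 [c sums_c]; exists (g c) => r; split.
  by move=> [f [bf ->]]; rewrite h12 //; congr g; apply/sums_c; exists f.
have [f [bf ->]] : exists f : T -> V, bijective f /\ c = s_prod h1 X f.
  exact/sums_c.
by move=> ->; exists f; rewrite h12.
Qed.

Lemma rhoG_diam2 (R : comPzRingType) (T : finType) (e : rel T) (A : {set T}) :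
  (forall x y : T, (gdist e x y <= 2)%N) ->
  #|A| = 2%N -> rhoG R e A = 2%:R - IG R e A.
Proof.
move=> e_diam A2.
apply: (of_pairs_card2 (g := fun r : R => 2%:R - r)) A2 => x y xy.
by rewrite gdist_diam2 //; case: (e x y); rewrite ?subr0 // [2%:R]mulrS addrK.
Qed.

Lemma s_prod_rhoG_diam2 (R : comPzRingType) (T V : finType) (e : rel T)
    (X : {set V} -> R) (f : T -> V) :
  (forall x y : T, (gdist e x y <= 2)%N) -> bijective f ->
  s_prod (rhoG R e) X f =
  2%:R * \sum_(B : {set V} | #|B| == 2%N) X B - s_prod (IG R e) X f.
Proof.
move=> e_diam bf; rewrite /s_prod -(sum_card2_imset X bf) mulr_sumr -sumrB.
by apply: eq_bigr => A /eqP A2; rewrite rhoG_diam2 // mulrBl.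
Qed.

Theorem mainTheorem18 (R : comPzRingType) (T : finType) (e : rel T)
    (e_sym : symmetric e) (e_irr : irreflexive e)
    (e_conn : forall x y : T, connect e x y)
    (e_diam : forall x y : T, (gdist e x y <= 2)%N)
    (V : finType) (X : {set V} -> R) (hV : #|V| = #|T|) :
  s_singleton (IG R e) X <-> s_singleton (rhoG R e) X.
Proof.
set K := 2%:R * \sum_(B : {set V} | #|B| == 2%N) X B.
split; apply: (s_singleton_map (g := fun r => K - r)) => f bf.
  exact: s_prod_rhoG_diam2.
by rewrite s_prod_rhoG_diam2 // opprB addrC subrK.
Qed.
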